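(* Let $G$ be a graph with $n$ vertices (identified with its graph of positive edges), let $r\ge 1$, and let $P=\{v_1,\ldots,v_r\}$ be the first $r$ pivots chosen by running $\textsf{QwickCluster}$ on $G$ (all of its pivots, if it chooses fewer than $r$). Then the expected number of edges of $G$ not incident with any element of $P\cup\Gamma(P)$ is less than $\frac{n^2}{2(r+1)}$.
   Context: A complete ``$+$/$-$''-labeled graph on $V$ is identified with the graph $(V,E^+)$ of its positive edges. $\Gamma(v)$ is the set of (positive) neighbours of $v$ in $G$ and $\Gamma(S)=\bigcup_{v\in S}\Gamma(v)$. Algorithm $\textsf{QwickCluster}$: set $R\gets V$. While $R\neq\emptyset$: pick a pivot $v$ uniformly at random from $R$; output the cluster $C=\{v\}\cup(\Gamma(v)\cap R)$; set $R\gets R\setminus C$. *)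

From mathcomp Require Import all_boot all_order all_algebra.
Set Implicit Arguments. Unset Strict Implicit. Unset Printing Implicit Defensive.
Import Order.TTheory GRing.Theory Num.Theory.
Local Open Scope ring_scope.

Section QC.
Variable T : finType.
(* the graph of positive edges: a symmetric irreflexive relation *)
Variable e : rel T.

Definition nbhd (v : T) : {set T} := [set w | e v w].
Definition nbhdS (S : {set T}) : {set T} := \bigcup_(v in S) nbhd v.

Definition edges : {set {set T}} :=
  [set A : {set T} | [exists x, exists y, (x != y) && e x y && (A == [set x; y])]].

Definition n_edges_avoiding (S : {set T}) : nat :=
  #|[set A in edges | [disjoint A & S]]|.

(* Expected value of n_edges_avoiding (P :|: nbhdS P) where P is the set of
   pivots collected so far together with the next k pivots chosen by
   QwickCluster started from remaining set Rm (all pivots, if it stops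
   earlier). *)
Fixpoint qc_exp (R : numFieldType) (k : nat) (Rm P : {set T}) : R :=
  match k with
  | 0%N => (n_edges_avoiding (P :|: nbhdS P))%:R
  | k'.+1 =>
    if Rm == set0 then (n_edges_avoiding (P :|: nbhdS P))%:R
    else (#|Rm|%:R)^-1 *
         \sum_(v in Rm) qc_exp R k' (Rm :\: (v |: (nbhd v :&: Rm))) (v |: P)
  end.

End QC.

From mathcomp Require Import all_boot all_order all_algebra.
From mathcomp Require Import ring lra.
Set Implicit Arguments. Unset Strict Implicit. Unset Printing Implicit Defensive.
Import Order.TTheory GRing.Theory Num.Theory.

(* Let S be the set of vertices not yet clustered and M the degree sum of the
   subgraph induced by S (twice its number of edges); put N = n^2.  A pivot v
   removes v and its neighbours, hence at least the degrees of the neighbours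
   of v; averaged over v this is (sum of squared degrees)/|S|, which by
   Cauchy-Schwarz is at least M^2/|S|^2 >= M^2/N.  So the expected next degree
   sum is at most M - M^2/N.  The function f_k(M) = M N / (2 (N + k M)) is
   increasing and concave, and f_k(M - M^2/N) <= f_(k+1)(M) (in terms of 1/M a
   step adds at least 1/N).  By Jensen's inequality and induction the expected
   number of surviving edges after k pivots is at most f_k(M) < N / (2 (k+1)),
   as M < N. *)

Section Degrees.
Variables (T : finType) (e : rel T).

Definition deg (S : {set T}) (x : T) : nat := #|nbhd e x :&: S|.
Definition deg_sum (S : {set T}) : nat := \sum_(x in S) deg S x.
Definition qc_next (S : {set T}) (v : T) : {set T} := S :\: (v |: (nbhd e v :&: S)).

Lemma nbhdSU1 v P : nbhdS e (v |: P) = nbhd e v :|: nbhdS e P.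
Proof. by rewrite /nbhdS bigcup_setU big_set1. Qed.

Lemma qc_next_unclustered S P v : S = ~: (P :|: nbhdS e P) ->
  qc_next S v = ~: (v |: P :|: nbhdS e (v |: P)).
Proof.
move=> ->; rewrite nbhdSU1; apply/setP => x; rewrite !inE.
by case: (x == v); case: (x \in P); case: (e v x); case: (x \in nbhdS e P).
Qed.

Lemma edge_card A : A \in edges e -> #|A| = 2.
Proof.
rewrite inE => /existsP[x /existsP[y /andP[/andP[neq_xy _] /eqP->]]].
by rewrite cards2 neq_xy.
Qed.

Lemma deg_subset (S S' : {set T}) x : S' \subset S -> deg S' x <= deg S x.
Proof. by move=> sub; apply/subset_leq_card/setIS. Qed.

Lemma deg_sum_qc_next S v :
  deg_sum (qc_next S v) + \sum_(x in S | e v x) deg S x <= deg_sum S.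
Proof.
rewrite /deg_sum big_mkcond [X in _ + X]big_mkcond [X in _ <= X]big_mkcond.
rewrite -big_split /=; apply: leq_sum => x _.
rewrite !inE negb_or.
case: (boolP (x \in S)) => xS; last by rewrite !andbF.
case: (boolP (e v x)) => evx /=; first by rewrite andbF.
by case: (x != v); rewrite //= addn0; exact/deg_subset/subsetDl.
Qed.

Hypothesis e_sym : symmetric e.

Lemma n_edges_avoiding_le S : 2 * n_edges_avoiding e S <= deg_sum (~: S).
Proof.
rewrite -[S in n_edges_avoiding _ S]setCK; move: (~: S) => {}S.
rewrite /n_edges_avoiding /deg_sum; set E := [set A in edges e | _].
have -> : 2 * #|E| = \sum_(A in E) \sum_(x in A) 1.
  rewrite mulnC -sum_nat_const; apply: eq_bigr => A; rewrite inE sum1_card.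
  by case/andP => /edge_card->.
rewrite (exchange_big_dep (mem S)) /=; last first.
  by move=> A x; rewrite inE => /andP[_ /disjointFr dis] /dis; rewrite inE => /negbFE.
apply: leq_sum => x xS; rewrite sum1dep_card.
apply: leq_trans (leq_imset_card (fun y => [set x; y]) (nbhd e x :&: S)).
apply/subset_leq_card/subsetP => A; rewrite !inE => /andP[/andP[AE dis] xA].
have AS y : y \in A -> y \in S by move/(disjointFr dis); rewrite inE => /negbFE.
move: AE xA AS => /existsP[y /existsP[z /andP[/andP[_ eyz] /eqP->]]].
rewrite !inE => /orP[]/eqP-> yzS; apply/imsetP.
- by exists z; rewrite // !inE eyz yzS // !inE eqxx orbT.
- by exists y; rewrite 1?setUC // !inE e_sym eyz yzS // !inE eqxx.
Qed.

Lemma sum_deg_nbhd (S : {set T}) :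
  \sum_(v in S) \sum_(x in S | e v x) deg S x = \sum_(x in S) deg S x ^ 2.
Proof.
rewrite (exchange_big_dep (mem S)) /=; last by move=> ? ? _ /andP[].
apply: eq_bigr => x xS; rewrite -[deg S x]mul1n -big_distrl /= sum1dep_card.
rewrite mul1n -mulnn; congr (_ * _); apply: eq_card => v.
by rewrite !inE xS e_sym andbC.
Qed.

Hypothesis e_irr : irreflexive e.

Lemma deg_lt_card (S : {set T}) x : deg S x < #|T|.
Proof.
have T_gt0 : 0 < #|T| by apply/card_gt0P; exists x.
rewrite -(prednK T_gt0) ltnS -(cardsC1 x).
apply/subset_leq_card/subsetP => y; rewrite !inE => /andP[exy _].
by apply: contraTneq exy => ->; rewrite e_irr.
Qed.

Lemma deg_sum_lt (S : {set T}) : 0 < #|T| -> deg_sum S < #|T| ^ 2.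
Proof.
move=> T_gt0; apply: (@leq_ltn_trans (#|S| * #|T|.-1)).
  rewrite -sum_nat_const; apply: leq_sum => x _.
  by rewrite -ltnS prednK ?deg_lt_card.
rewrite expnS expn1 (leq_ltn_trans (leq_mul (max_card S) (leqnn _))) //.
by rewrite ltn_pmul2l // prednK.
Qed.

End Degrees.

Local Open Scope ring_scope.

Lemma sqr_sum_le_card_mul_sum_sqr (R : realFieldType) (I : finType) (A : {pred I})
    (a : I -> R) :
  (\sum_(i in A) a i) ^+ 2 <= #|A|%:R * \sum_(i in A) a i ^+ 2.
Proof.
set s := \sum_(i in A) a i; set q := \sum_(i in A) a i ^+ 2.
have spread_ge0 : 0 <= \sum_(i in A) \sum_(j in A) (a i - a j) ^+ 2.
  by do 2![apply: sumr_ge0 => ? _]; exact: sqr_ge0.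
have spreadE : \sum_(i in A) \sum_(j in A) (a i - a j) ^+ 2 =
    2 * (#|A|%:R * q - s ^+ 2).
  under eq_bigr => i _ do under eq_bigr => j _ do
    rewrite sqrrB -addrAC -mulr_natl.
  under eq_bigr => i _ do
    rewrite sumrB big_split /= sumr_const -!mulr_sumr.
  rewrite sumrB big_split /= sumr_const -mulr_sumr -mulr_suml sumrMnl.
  by rewrite -/s -/q -mulr_natr expr2; ring.
by move: spread_ge0; rewrite spreadE pmulr_rge0 // subr_ge0.
Qed.

Section QcBound.
Variables (R : realFieldType) (N : R).
Hypothesis N_gt0 : 0 < N.

Definition qc_bound (k : nat) (y : R) : R := y * N / (2 * (N + k%:R * y)).
Arguments qc_bound : simpl never.

Let denom_gt0 k y : 0 <= y -> 0 < N + k%:R * y.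
Proof. by move=> y_ge0; rewrite ltr_wpDr ?mulr_ge0. Qed.

Lemma qc_bound_le_tangent k x y : 0 <= x -> 0 <= y ->
  qc_bound k y <= qc_bound k x + N ^+ 2 / (2 * (N + k%:R * x) ^+ 2) * (y - x).
Proof.
move=> x_ge0 y_ge0.
have Nx_gt0 := denom_gt0 k x_ge0; have Ny_gt0 := denom_gt0 k y_ge0.
rewrite -subr_ge0.
have -> : qc_bound k x + N ^+ 2 / (2 * (N + k%:R * x) ^+ 2) * (y - x) - qc_bound k y =
    N ^+ 2 * k%:R * (x - y) ^+ 2 / (2 * (N + k%:R * x) ^+ 2 * (N + k%:R * y)).
  by rewrite /qc_bound; field; rewrite !gt_eqF.
apply: divr_ge0; first by rewrite mulr_ge0 ?sqr_ge0 // mulr_ge0 ?sqr_ge0 ?ler0n.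
by rewrite mulr_ge0 ?(ltW Ny_gt0) // mulr_ge0 ?sqr_ge0.
Qed.

Lemma qc_bound_avg_le (I : finType) (A : {pred I}) k (y : I -> R) :
  (0 < #|A|)%N -> (forall i, 0 <= y i) ->
  #|A|%:R^-1 * \sum_(i in A) qc_bound k (y i)
    <= qc_bound k (#|A|%:R^-1 * \sum_(i in A) y i).
Proof.
move=> A_gt0 y_ge0; set m := _ * \sum_(i in A) y i.
have A_neq0 : #|A|%:R != 0 :> R by rewrite pnatr_eq0 -lt0n.
have m_ge0 : 0 <= m by rewrite mulr_ge0 ?invr_ge0 ?ler0n ?sumr_ge0.
rewrite ler_pdivrMl ?ltr0n //.
apply: (le_trans (ler_sum _ (fun i _ => qc_bound_le_tangent k m_ge0 (y_ge0 i)))).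
have sum_y : m *+ #|A| = \sum_(i in A) y i by rewrite /m -mulr_natl mulVKf.
rewrite big_split /= sumr_const -mulr_sumr sumrB sumr_const sum_y.
by rewrite subrr mulr0 addr0 mulr_natl.
Qed.

Lemma qc_bound_homo k x y : 0 <= x -> x <= y -> qc_bound k x <= qc_bound k y.
Proof.
move=> x_ge0 le_xy; have y_ge0 := le_trans x_ge0 le_xy.
rewrite /qc_bound ler_pdivrMr ?pmulr_rgt0 ?denom_gt0 //.
rewrite mulrAC ler_pdivlMr ?pmulr_rgt0 ?denom_gt0 //.
have NN_gt0 := mulr_gt0 N_gt0 N_gt0; nra.
Qed.

Lemma qc_bound_succ k M : 0 <= M ->
  qc_bound k.+1 M = qc_bound k (M * N / (N + M)).
Proof.
move=> M_ge0; have NM_gt0 : 0 < N + M by rewrite ltr_pwDl.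
have D_gt0 : 0 < N * (N + M) + k%:R * (M * N).
  by rewrite ltr_wpDr ?mulr_ge0 ?mulr_gt0 // ltW.
have := denom_gt0 k.+1 M_ge0; rewrite /qc_bound -addn1 natrD => D'_gt0.
by field; rewrite !gt_eqF.
Qed.

Lemma qc_bound_step k M : 0 <= M -> M <= N ->
  qc_bound k (M - M ^+ 2 / N) <= qc_bound k.+1 M.
Proof.
move=> M_ge0 le_MN; rewrite qc_bound_succ //.
have NM_gt0 : 0 < N + M by rewrite ltr_pwDl.
apply: qc_bound_homo.
  by rewrite subr_ge0 ler_pdivrMr // expr2 ler_wpM2l.
rewrite ler_pdivlMr // -subr_ge0.
have -> : M * N - (M - M ^+ 2 / N) * (N + M) = M ^+ 3 / N.
  by field; rewrite gt_eqF.
by rewrite divr_ge0 ?exprn_ge0 // ltW.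
Qed.

Lemma qc_bound_lt k M : 0 <= M -> M < N -> qc_bound k M < N / (2 * k.+1%:R).
Proof.
move=> M_ge0 lt_MN.
rewrite /qc_bound ltr_pdivrMr ?pmulr_rgt0 ?denom_gt0 //.
rewrite mulrAC ltr_pdivlMr ?pmulr_rgt0 ?ltr0n //.
rewrite -addn1 natrD; nra.
Qed.

End QcBound.

Section QcExp.
Variables (R : realFieldType) (T : finType) (e : rel T).
Hypotheses (e_sym : symmetric e) (e_irr : irreflexive e).

Lemma mean_deg_sum_qc_next_le (S : {set T}) (N : R) :
  (0 < #|S|)%N -> #|S|%:R ^+ 2 <= N ->
  #|S|%:R^-1 * \sum_(v in S) (deg_sum e (qc_next e S v))%:R
    <= (deg_sum e S)%:R - (deg_sum e S)%:R ^+ 2 / N.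
Proof.
move=> S_gt0 le_sN.
set s : R := #|S|%:R; set M : R := (deg_sum e S)%:R.
set D : R := (\sum_(x in S) deg e S x ^ 2)%:R.
have s_gt0 : 0 < s by rewrite ltr0n.
have N_gt0 : 0 < N := lt_le_trans (exprn_gt0 _ s_gt0) le_sN.
have removed : \sum_(v in S) (deg_sum e (qc_next e S v))%:R + D <= s * M.
  rewrite /D -(sum_deg_nbhd e_sym) -natr_sum -natrD /s /M -natrM ler_nat.
  rewrite -sum_nat_const -big_split /=; apply: leq_sum => v _.
  exact: deg_sum_qc_next.
have cauchy_schwarz : M ^+ 2 <= s * D.
  have := sqr_sum_le_card_mul_sum_sqr S (fun x => (deg e S x)%:R : R).
  rewrite /M /D /deg_sum !natr_sum.
  by under [X in _ -> _ <= _ * X]eq_bigr do rewrite natrX.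
have D_ge : s * M ^+ 2 / N <= D by rewrite ler_pdivrMr //; nra.
by rewrite [s^-1 * _]mulrC ler_pdivrMr //; lra.
Qed.

Lemma qc_exp_le_qc_bound k : (0 < #|T|)%N -> forall S P, S = ~: (P :|: nbhdS e P) ->
  qc_exp e R k S P <= qc_bound (#|T| ^ 2)%:R k (deg_sum e S)%:R.
Proof.
move=> T_gt0; set N : R := (#|T| ^ 2)%:R.
have N_gt0 : 0 < N by rewrite ltr0n expn_gt0 T_gt0.
have edges_le S P : S = ~: (P :|: nbhdS e P) ->
    2 * (n_edges_avoiding e (P :|: nbhdS e P))%:R <= (deg_sum e S)%:R :> R.
  by move=> ->; rewrite -natrM ler_nat n_edges_avoiding_le.
elim: k => [|k IH] S P S_def /=.
  have -> : qc_bound N 0 (deg_sum e S)%:R = (deg_sum e S)%:R / 2.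
    by rewrite /qc_bound mul0r addr0; field; rewrite pnatr_eq0 -lt0n.
  by rewrite ler_pdivlMr // mulrC edges_le.
case: ifP => [/eqP S0 | S_neq0].
  have := edges_le _ _ S_def; rewrite S0 /deg_sum big_set0 /qc_bound !mul0r.
  by rewrite pmulr_rle0 // ler0n.
have S_gt0 : (0 < #|S|)%N by rewrite card_gt0 S_neq0.
set M : R := (deg_sum e S)%:R.
have M_ge0 : 0 <= M := ler0n _ _.
have M_lt_N : M < N by rewrite ltr_nat deg_sum_lt.
apply: le_trans (qc_bound_step N_gt0 k M_ge0 (ltW M_lt_N)).
have le_SN : #|S|%:R ^+ 2 <= N by rewrite -natrX ler_nat leq_exp2r // max_card.
apply: le_trans (qc_bound_homo N_gt0 k _ (mean_deg_sum_qc_next_le S_gt0 le_SN));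
  last by rewrite mulr_ge0 ?invr_ge0 // -natr_sum.
apply: le_trans (qc_bound_avg_le N_gt0 k S_gt0 (fun v => ler0n _ _)).
rewrite ler_wpM2l ?invr_ge0 //; apply: ler_sum => v _.
exact/IH/qc_next_unclustered.
Qed.

End QcExp.

Theorem lemma3p3 (R : realFieldType) (T : finType) (e : rel T)
  (e_sym : symmetric e) (e_irr : irreflexive e) (r : nat) :
  (0 < #|T|)%N -> (1 <= r)%N ->
  qc_exp e R r [set: T] set0 < (#|T| ^ 2)%:R / (2 * r.+1)%:R.
Proof.
(* The bound holds for r = 0 as well. *)
move=> T_gt0 _.
have init : [set: T] = ~: (set0 :|: nbhdS e set0).
  by rewrite /nbhdS big_set0 setU0 setC0.
apply: le_lt_trans (qc_exp_le_qc_bound R e_sym e_irr r T_gt0 init) _.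
rewrite natrM; apply: qc_bound_lt; first by rewrite ltr0n expn_gt0 T_gt0.
  exact: ler0n.
by rewrite ltr_nat deg_sum_lt.
Qed.
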